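(* Let $n\ge1$, $\mu>0$, and consider $\min_{x\in\mathcal S^{n-1}} f(x)+\mu\|x\|_1$, where $\mathcal S^{n-1}=\{x\in\mathbb R^n:x^\top x=1\}$. Let $x^*$ be a local optimal solution and let $y^*\in\mathbb R^n$ satisfy $\Pi_{x^*}(\nabla f(x^* )+y^* )=0$ and $y^*\in\mu\partial\|x^*\|_1$. Then $$T_{x^*}\mathcal S^{n-1}+\mathcal C_{\theta,g_1}(x^*,y^* )=\mathbb R^n,$$ i.e. the M-SRCQ holds at $x^*$ with respect to $y^*$, and consequently $y^*$ is the unique vector satisfying these two conditions at $x^*$.
   Context: $f$ is a smooth function on an open set of $\mathbb R^n$ containing the unit sphere $\mathcal S^{n-1}$ (viewed as a Riemannian submanifold of $\mathbb R^n$), with Euclidean gradient $\nabla f$. $T_x\mathcal S^{n-1}=\{\xi:x^\top\xi=0\}$ and $\Pi_x(v)=v-xx^\top v$ is the orthogonal projection onto it. $\partial\|\cdot\|_1$ is the convex subdifferential. With $\theta=\mu\|\cdot\|_1$ and $g_1(x)=x$, $\theta^\downarrow(x;d)=\mu\sum_{x_i=0}|d_i|+\mu\sum_{x_i>0}d_i-\mu\sum_{x_i<0}d_i$ and $\mathcal C_{\theta,g_1}(x,y)=\{d\in\mathbb R^n:\theta^\downarrow(x;d)=\langle d,y\rangle\}$. *)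

From HB Require Import structures.
From mathcomp Require Import all_boot all_order all_algebra.
From mathcomp Require Import all_classical all_reals all_analysis.
Set Implicit Arguments. Unset Strict Implicit. Unset Printing Implicit Defensive.
Import Order.TTheory GRing.Theory Num.Theory.
Import numFieldNormedType.Exports.
Local Open Scope classical_set_scope.
Local Open Scope ring_scope.

Section Defs.
Variables (R : realType) (n : nat).
Notation V := 'rV[R]_n.

Definition dotv (u v : V) : R := \sum_(i < n) u 0 i * v 0 i.

Definition l1norm (x : V) : R := \sum_(i < n) `|x 0 i|.

Definition sphere : set V := [set x | dotv x x = 1].

Definition tangent (x : V) : set V := [set xi | dotv x xi = 0].

Definition proj_tan (x v : V) : V := v - (dotv x v) *: x.

Definition basisv (i : 'I_n) : V := delta_mx 0 i.

Fixpoint iter_dir (f : V -> R) (vs : seq V) : V -> R :=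
  match vs with
  | [::] => f
  | v :: vs' => fun x => 'D_v (iter_dir f vs') x
  end.

Definition smooth_on (U : set V) (f : V -> R) : Prop :=
  forall vs : seq V,
    (forall x v, U x -> derivable (iter_dir f vs) x v) /\
    {within U, continuous (iter_dir f vs)}.

Definition egrad (f : V -> R) (x : V) : V := \row_(i < n) 'D_(basisv i) f x.

Definition subdiff_l1 (x : V) : set V :=
  [set g | forall z : V, l1norm x + dotv g (z - x) <= l1norm z].

Definition mu_subdiff_l1 (mu : R) (x : V) : set V :=
  [set y | exists2 g, subdiff_l1 x g & y = mu *: g].

(* theta^downarrow(x; d) for theta = mu ||.||_1, g_1 = id *)
Definition theta_dd (mu : R) (x d : V) : R :=
  mu * (\sum_(i < n | x 0 i == 0) `|d 0 i|)
  + mu * (\sum_(i < n | 0 < x 0 i) d 0 i)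
  - mu * (\sum_(i < n | x 0 i < 0) d 0 i).

Definition crit_cone (mu : R) (x y : V) : set V :=
  [set d | theta_dd mu x d = dotv d y].

Definition local_min_on_sphere (F : V -> R) (x : V) : Prop :=
  sphere x /\ \forall z \near x, sphere z -> F x <= F z.

End Defs.

(* Every point of the sphere has a coordinate x_i <> 0.  The coordinate line
   spanned by e_i lies in the critical cone: on it theta^downarrow is linear
   with slope mu sgn(x_i), which equals y_i because y_i x_i = mu |x_i| for
   every y in mu d||x||_1.  Since x^T e_i <> 0, this line complements the
   tangent space.  The same identity pins down y_i, and Pi_x(grad f + y) = 0
   says that y is grad f plus a multiple of x; comparing i-th coordinates fixes
   that multiple, hence y. *)
From HB Require Import structures.
From mathcomp Require Import all_boot all_order all_algebra.
From mathcomp Require Import all_classical all_reals all_analysis.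
From mathcomp Require Import lra.
Set Implicit Arguments. Unset Strict Implicit. Unset Printing Implicit Defensive.
Import Order.TTheory GRing.Theory Num.Theory.
Import numFieldNormedType.Exports.
Local Open Scope classical_set_scope.
Local Open Scope ring_scope.

Section SphereL1.
Variables (R : realType) (n : nat).
Implicit Types (x y g v w : 'rV[R]_n) (a mu : R) (i j : 'I_n).

Lemma basisvZ_entry a i j : (a *: basisv R i) 0 j = if j == i then a else 0.
Proof. by rewrite /basisv !mxE eqxx /= eq_sym; case: (i == j); rewrite ?mulr1 ?mulr0. Qed.

Lemma dotvC v w : dotv v w = dotv w v.
Proof. by apply: eq_bigr => j _; rewrite mulrC. Qed.

Lemma dotvBr w u v : dotv w (u - v) = dotv w u - dotv w v.
Proof. by rewrite /dotv -sumrB; apply: eq_bigr => j _; rewrite !mxE mulrBr. Qed.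

Lemma sum_basisvZ (P : pred 'I_n) (G : R -> R) a i : G 0 = 0 ->
  \sum_(j < n | P j) G ((a *: basisv R i) 0 j) = if P i then G a else 0.
Proof.
move=> G0; case Pi: (P i).
  rewrite (bigD1 i) //= basisvZ_entry eqxx big1 ?addr0 //.
  by move=> j /andP[_ /negPf ji]; rewrite basisvZ_entry ji G0.
apply: big1 => j Pj; rewrite basisvZ_entry; case: eqP => // ji.
by rewrite ji Pi in Pj.
Qed.

Lemma dotv_basisvZr w a i : dotv w (a *: basisv R i) = a * w 0 i.
Proof.
rewrite /dotv (bigD1 i) //= big1 ?addr0 => [|j /negPf ji].
  by rewrite basisvZ_entry eqxx mulrC.
by rewrite basisvZ_entry ji mulr0.
Qed.

Lemma dotv_basisvZl w a i : dotv (a *: basisv R i) w = a * w 0 i.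
Proof. by rewrite dotvC dotv_basisvZr. Qed.

Lemma l1norm_addZbasisv x a i :
  l1norm (x + a *: basisv R i) = l1norm x - `|x 0 i| + `|x 0 i + a|.
Proof.
rewrite /l1norm (bigD1 i) //= [in RHS](bigD1 i) //= mxE basisvZ_entry eqxx.
rewrite (eq_bigr (fun j => `|x 0 j|)) => [|j /negPf ji]; first lra.
by rewrite mxE basisvZ_entry ji addr0.
Qed.

(* Test the subgradient inequality at x - x_i e_i and at x + x_i e_i. *)
Lemma subdiff_l1_mul_entry x g i : subdiff_l1 x g -> g 0 i * x 0 i = `|x 0 i|.
Proof.
move=> sub_g.
have step a : l1norm x + a * g 0 i <= l1norm x - `|x 0 i| + `|x 0 i + a|.
  by have := sub_g (x + a *: basisv R i);
    rewrite addrAC subrr add0r dotv_basisvZr l1norm_addZbasisv.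
have := step (- x 0 i); have := step (x 0 i).
rewrite subrr normr0 -mulr2n normrMn mulr2n => ge le.
by apply/eqP; rewrite eq_le; apply/andP; split; lra.
Qed.

Lemma mu_subdiff_l1_mul_entry mu x y i :
  mu_subdiff_l1 mu x y -> y 0 i * x 0 i = mu * `|x 0 i|.
Proof. by case=> g /(subdiff_l1_mul_entry i) gx ->; rewrite mxE -mulrA gx. Qed.

Lemma mu_subdiff_l1_entry mu x y i : x 0 i != 0 ->
  mu_subdiff_l1 mu x y -> y 0 i = mu * `|x 0 i| / x 0 i.
Proof. by move=> xi0 /(mu_subdiff_l1_mul_entry i) <-; rewrite mulfK. Qed.

Lemma sphere_nonzero_entry x : sphere x -> exists i, x 0 i != 0.
Proof.
move=> x1; apply/not_existsP => x0; move: x1.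
rewrite /sphere /= /dotv big1 => [/eqP|j _]; first by rewrite eq_sym oner_eq0.
by move/negP: (x0 j); rewrite negbK => /eqP ->; rewrite mulr0.
Qed.

Lemma tangent_subZbasisv x v i : x 0 i != 0 ->
  tangent x (v - (dotv x v / x 0 i) *: basisv R i).
Proof. by move=> xi0; rewrite /tangent /= dotvBr dotv_basisvZr divfK ?subrr. Qed.

Lemma theta_dd_basisvZ mu x a i : x 0 i != 0 ->
  theta_dd mu x (a *: basisv R i) = mu * a * Num.sg (x 0 i).
Proof.
move=> xi0; rewrite /theta_dd sum_basisvZ ?normr0 //.
rewrite !(@sum_basisvZ _ id) // (negPf xi0).
case: (ltrgtP (x 0 i) 0) xi0 => [xlt|xgt|->]; rewrite ?eqxx // => _.
- by rewrite ltr0_sg //; lra.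
- by rewrite gtr0_sg //; lra.
Qed.

Lemma crit_cone_basisvZ mu x y a i : x 0 i != 0 ->
  mu_subdiff_l1 mu x y -> crit_cone mu x y (a *: basisv R i).
Proof.
move=> xi0 sub_y; rewrite /crit_cone /= theta_dd_basisvZ // dotv_basisvZl.
by rewrite (mu_subdiff_l1_entry xi0 sub_y) normrEsg !mulrA mulfK // [a * mu]mulrC.
Qed.

Lemma proj_tan_eq0 x w : proj_tan x w = 0 -> w = dotv x w *: x.
Proof. by move/eqP; rewrite subr_eq0 => /eqP. Qed.

Lemma proj_tan_addr_inj x e y y' i : x 0 i != 0 -> y 0 i = y' 0 i ->
  proj_tan x (e + y) = 0 -> proj_tan x (e + y') = 0 -> y = y'.
Proof.
move=> xi0 yi /proj_tan_eq0 ey /proj_tan_eq0 ey'.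
set c := dotv x (e + y) in ey; set c' := dotv x (e + y') in ey'.
have entry j : e 0 j + y 0 j = c * x 0 j /\ e 0 j + y' 0 j = c' * x 0 j.
  by split; [move/rowP/(_ j): ey | move/rowP/(_ j): ey']; rewrite !mxE.
have cc' : c = c'.
  by apply: (mulIf xi0); have [] := entry i; rewrite yi; lra.
by apply/rowP => j; have [] := entry j; rewrite cc'; lra.
Qed.

End SphereL1.

Theorem proposition7 (R : realType) (n : nat) (mu : R)
    (f : 'rV[R]_n -> R) (U : set 'rV[R]_n) (xs ys : 'rV[R]_n) :
  (0 < n)%N -> 0 < mu ->
  open U -> sphere (n:=n) `<=` U -> smooth_on U f ->
  local_min_on_sphere (fun x => f x + mu * l1norm x) xs ->
  proj_tan xs (egrad f xs + ys) = 0 ->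
  mu_subdiff_l1 mu xs ys ->
  (forall v : 'rV[R]_n, exists xi d,
      tangent xs xi /\ crit_cone mu xs ys d /\ v = xi + d) /\
  (forall y : 'rV[R]_n,
      proj_tan xs (egrad f xs + y) = 0 -> mu_subdiff_l1 mu xs y -> y = ys).
Proof.
move=> _ _ _ _ _ [/sphere_nonzero_entry [i xi0] _] grad_ys sub_ys.
split=> [v | y grad_y sub_y].
  set c := dotv xs v / xs 0 i.
  exists (v - c *: basisv R i), (c *: basisv R i); split; last split.
  - exact: tangent_subZbasisv.
  - exact: crit_cone_basisvZ.
  - by rewrite subrK.
apply: (proj_tan_addr_inj xi0 _ grad_y grad_ys).
by rewrite (mu_subdiff_l1_entry xi0 sub_y) (mu_subdiff_l1_entry xi0 sub_ys).
Qed.
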